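(* Let $k,t\ge1$ with $t$ a power of two and $k\le t/6$. Then there exists a valid perfect randomized $[t,k]$-interval system $\mathcal{F}$ with $\mathrm{val}(\mathcal{F})\le \dfrac{10k^2\log(t)}{t}$ (logarithm base 2).
   Context: An interval is a nonempty set $\{a,\ldots,b\}$ of integers; a $[t,k]$-interval system is a set of $k$ pairwise disjoint intervals contained in $[t]$; a randomized one is a distribution over such systems. $\mathrm{val}(F)=\sum_{I\in F}1/|I|$, $\mathrm{val}(\mathcal{F})=\mathbb{E}_{F\sim\mathcal{F}}\mathrm{val}(F)$. $\mathrm{Sets}(F)$ is the distribution of the set obtained by choosing independently a uniform element from each interval of $F$; $\mathrm{Sets}(\mathcal{F})$ samples $F\sim\mathcal{F}$ then a set from $\mathrm{Sets}(F)$. $\mathcal{F}$ is perfect if $\mathrm{Sets}(\mathcal{F})$ is uniform over all $k$-element subsets of $[t]$. $F$ is valid if $\sum_{I\in F}|I|\le t/2$; $\mathcal{F}$ is valid if all systems in its support are valid. *)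

(* Ground set [t] is modelled by 'I_t = {0,..,t-1}
   (an order-preserving relabelling of {1,..,t}). *)
From HB Require Import structures.
From mathcomp Require Import all_boot all_order all_algebra.
From mathcomp Require Import reals.
Set Implicit Arguments. Unset Strict Implicit. Unset Printing Implicit Defensive.
Import Order.TTheory GRing.Theory Num.Theory.
Local Open Scope ring_scope.

Section IntervalSystems.
Variable t : nat.

Definition is_interval (I : {set 'I_t}) : bool :=
  (I != set0) &&
  [forall x : 'I_t, forall y : 'I_t, forall z : 'I_t,
     [&& x \in I, z \in I, (x <= y)%N & (y <= z)%N] ==> (y \in I)].

Definition interval_system (k : nat) (F : {set {set 'I_t}}) : bool :=
  [&& #|F| == k, [forall I in F, is_interval I] & trivIset F].

Definition valid_system (F : {set {set 'I_t}}) : bool :=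
  ((\sum_(I in F) #|I|).*2 <= t)%N.

Variable R : realType.

Definition val_sys (F : {set {set 'I_t}}) : R :=
  \sum_(I in F) (#|I|%:R)^-1.

Definition choice_fun (F : {set {set 'I_t}})
    (c : {ffun {set 'I_t} -> option 'I_t}) : bool :=
  [forall I, if I \in F then (if c I is Some x then x \in I else false)
             else c I == None].

Definition chosen_set (c : {ffun {set 'I_t} -> option 'I_t}) : {set 'I_t} :=
  [set x | [exists I, c I == Some x]].

(* Sets(F)(S): probability that independently choosing a uniform element of
   each interval of F yields the set S (uniform over all choice functions). *)
Definition sets_prob (F : {set {set 'I_t}}) (S : {set 'I_t}) : R :=
  #|[set c | choice_fun F c & chosen_set c == S]|%:R /
  #|[set c | choice_fun F c]|%:R.

Definition randomized_system (k : nat) (mu : {ffun {set {set 'I_t}} -> R}) : Prop :=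
  (forall F, 0 <= mu F) /\ (\sum_F mu F = 1) /\
  (forall F, mu F != 0 -> interval_system k F).

Definition valid_rsystem (mu : {ffun {set {set 'I_t}} -> R}) : Prop :=
  forall F, mu F != 0 -> valid_system F.

Definition rsets_prob (mu : {ffun {set {set 'I_t}} -> R}) (S : {set 'I_t}) : R :=
  \sum_F mu F * sets_prob F S.

Definition perfect (k : nat) (mu : {ffun {set {set 'I_t}} -> R}) : Prop :=
  forall S : {set 'I_t},
    rsets_prob mu S = if #|S| == k then ('C(t, k)%:R)^-1 else 0.

Definition val_rsys (mu : {ffun {set {set 'I_t}} -> R}) : R :=
  \sum_F mu F * val_sys F.

End IntervalSystems.

From HB Require Import structures.
From mathcomp Require Import all_boot all_order all_algebra all_fingroup.
From mathcomp Require Import zify reals.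
Set Implicit Arguments. Unset Strict Implicit. Unset Printing Implicit Defensive.

(* For a k-subset S of [t] and s in S, the isolation level of s
   is the largest j <= m such that the dyadic block of size 2^j around s meets
   S only in s.  Phi(S) consists of the dyadic blocks of size 2^(j-2) around
   the points s of S, j their isolation levels.  These are disjoint intervals,
   and since the blocks at the isolation levels are disjoint too, the total
   length is at most (t + 4k)/4 <= t/2.  The randomized system mu is the image
   of the uniform distribution on k-subsets under Phi.

   Choosing a point in each block of Phi(S) moves every point of
   S inside its own block, which changes no isolation level, so the chosen set
   S' satisfies Phi(S') = Phi(S); conversely each such S' arises from exactly
   one choice.  Hence Sets(Phi(S)) is uniform on the fibre of Phi over Phi(S),
   and averaging over fibres gives the uniform distribution on k-subsets.

   Value.  t * val(Phi(S)) = sum_s 2^(m - j(s) + 2), and 2^(m - j(s)) is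
   bounded by the numbers of neighbours of s in S at the levels above j(s),
   weighted geometrically.  Counting pairs of points in common dyadic blocks
   by symmetry gives E[t * val] <= 8 k^2 m. *)

Lemma divn_pow2_le x a b : a <= b -> x %/ 2 ^ b = (x %/ 2 ^ a) %/ 2 ^ (b - a).
Proof. by move=> le_ab; rewrite -divnMA -expnD subnKC. Qed.

Lemma same_block_up x y a b :
  a <= b -> x %/ 2 ^ a = y %/ 2 ^ a -> x %/ 2 ^ b = y %/ 2 ^ b.
Proof. by move=> le_ab e; rewrite (divn_pow2_le x le_ab) (divn_pow2_le y le_ab) e. Qed.

Lemma same_block_transfer x y x' y' a :
  x %/ 2 ^ a = x' %/ 2 ^ a -> y %/ 2 ^ a = y' %/ 2 ^ a -> x %/ 2 ^ a != y %/ 2 ^ a ->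
  forall j, (x %/ 2 ^ j == y %/ 2 ^ j) = (x' %/ 2 ^ j == y' %/ 2 ^ j).
Proof.
move=> ex ey sep_xy j; case: (leqP j a) => [le_ja | /ltnW le_aj].
  apply/idP/idP => /eqP e; have := same_block_up le_ja e; [|rewrite -ex -ey];
    by move=> e'; rewrite e' eqxx in sep_xy.
by rewrite (divn_pow2_le x le_aj) (divn_pow2_le y le_aj) (divn_pow2_le x' le_aj)
  (divn_pow2_le y' le_aj) ex ey.
Qed.

Section DyadicSystem.
Variable m : nat.
Implicit Types (S : {set 'I_(2 ^ m)}) (s u v x : 'I_(2 ^ m)).

Definition dyadic_block (j : nat) s : {set 'I_(2 ^ m)} :=
  [set x : 'I_(2 ^ m) | x %/ 2 ^ j == s %/ 2 ^ j].

Definition isolated S u j : bool :=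
  [forall v in S, (v != u) ==> (v %/ 2 ^ j != u %/ 2 ^ j)].

(* The largest level j <= m at which u is isolated in S (level 0 always is). *)
Definition isolation_level S u : nat :=
  @nat_of_ord m.+1 [arg max_(j > ord0 | isolated S u j) (j : nat)].

Definition block_level S u : nat := (isolation_level S u - 2)%N.

Definition dyadic_system S : {set {set 'I_(2 ^ m)}} :=
  [set dyadic_block (block_level S s) s | s in S].

Lemma block_in_dyadic_system S s :
  s \in S -> dyadic_block (block_level S s) s \in dyadic_system S.
Proof. exact: imset_f. Qed.

Lemma mem_dyadic_block j s x : (x \in dyadic_block j s) = (x %/ 2 ^ j == s %/ 2 ^ j).
Proof. by rewrite inE. Qed.

Lemma dyadic_block_self j s : s \in dyadic_block j s.
Proof. by rewrite mem_dyadic_block. Qed.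

(* Below level m, the block at level j is {q 2^j, ..., q 2^j + 2^j - 1}. *)
Lemma card_dyadic_block j s : j <= m -> #|dyadic_block j s| = 2 ^ j.
Proof.
move=> le_jm; set q := s %/ 2 ^ j.
have pos : 0 < 2 ^ j by rewrite expn_gt0.
have fits : q * 2 ^ j + 2 ^ j <= 2 ^ m.
  have e : 2 ^ m = 2 ^ (m - j) * 2 ^ j by rewrite -expnD subnK.
  have : q < 2 ^ (m - j) by rewrite ltn_divLR // -e.
  by rewrite e -mulSnr => h; apply: leq_mul h (leqnn _).
pose g (i : 'I_(2 ^ j)) : 'I_(2 ^ m) := insubd s (q * 2 ^ j + i).
have val_g (i : 'I_(2 ^ j)) : val (g i) = q * 2 ^ j + i.
  by rewrite /g val_insubd ifT //; apply: leq_trans fits; rewrite ltn_add2l.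
have -> : dyadic_block j s = g @: [set: 'I_(2 ^ j)].
  apply/setP => x; rewrite mem_dyadic_block; apply/idP/imsetP => [/eqP e|[i _ ->]].
    have lt_r : x %% 2 ^ j < 2 ^ j by rewrite ltn_pmod.
    exists (Ordinal lt_r) => //; apply: val_inj.
    by rewrite val_g /= {1}(divn_eq x (2 ^ j)) e.
  by rewrite val_g divnMDl // divn_small // addn0.
rewrite card_imset ?cardsT ?card_ord // => i i' /(congr1 val).
by rewrite !val_g => /addnI /val_inj.
Qed.

(* Dyadic blocks are intervals, since x |-> x %/ 2^j is monotone. *)
Lemma dyadic_block_interval j s : is_interval (dyadic_block j s).
Proof.
apply/andP; split; first by apply/set0Pn; exists s; apply: dyadic_block_self.
apply/forallP => x; apply/forallP => y; apply/forallP => z; apply/implyP.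
case/and4P; rewrite !mem_dyadic_block => /eqP ex /eqP ez le_xy le_yz.
have := leq_div2r (2 ^ j) le_xy; have := leq_div2r (2 ^ j) le_yz.
by rewrite ex ez eqn_leq => -> ->.
Qed.

(* Blocks of level 0 are singletons, so every point is isolated at level 0. *)
Lemma isolated0 S u : isolated S u 0.
Proof. by apply/forall_inP => v _; rewrite expn0 !divn1; apply/implyP. Qed.

Lemma isolated_down S u i j : i <= j -> isolated S u j -> isolated S u i.
Proof.
move=> le_ij /forall_inP iso; apply/forall_inP => v vS; apply/implyP => ne.
apply: contra (implyP (iso v vS) ne) => /eqP e; apply/eqP; exact: same_block_up e.
Qed.

Lemma isolatedP S u j v :
  isolated S u j -> v \in S -> v != u -> v %/ 2 ^ j != u %/ 2 ^ j.
Proof. by move=> /forall_inP iso vS ne; apply: implyP (iso v vS) ne. Qed.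

Lemma isolation_levelP S u :
  [/\ isolation_level S u <= m, isolated S u (isolation_level S u)
    & forall j, j <= m -> isolated S u j -> j <= isolation_level S u].
Proof.
rewrite /isolation_level; case: arg_maxnP; first exact: isolated0.
move=> i iso_i max_i; split => //; first by rewrite -ltnS.
by move=> j le_jm iso_j; apply: (max_i (Ordinal (le_jm : j < m.+1))).
Qed.

Lemma block_level_le S u : block_level S u <= isolation_level S u.
Proof. exact: leq_subr. Qed.

Lemma block_level_le_m S u : block_level S u <= m.
Proof. by case: (isolation_levelP S u) => le_m _ _; apply: leq_trans (block_level_le S u) le_m. Qed.

Lemma dyadic_block_other S s s' j : s \in S -> s' \in S -> s' != s ->
  j <= isolation_level S s -> s' \notin dyadic_block j s.
Proof.
move=> sS s'S ne le_j; rewrite mem_dyadic_block; case: (isolation_levelP S s) => _ iso _.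
exact: isolatedP (isolated_down le_j iso) s'S ne.
Qed.

Lemma setI_dyadic_block S s : s \in S -> S :&: dyadic_block (block_level S s) s = [set s].
Proof.
move=> sS; apply/setP => x; rewrite !inE; apply/andP/eqP => [[xS xb]|->].
  apply/eqP; apply: contraTT xb => ne.
  by have := dyadic_block_other sS xS ne (block_level_le S s); rewrite inE.
by rewrite sS eqxx.
Qed.

Lemma dyadic_blocks_disjoint S (f : 'I_(2 ^ m) -> nat) s s' :
  (forall u, f u <= isolation_level S u) -> s \in S -> s' \in S -> s != s' ->
  [disjoint dyadic_block (f s) s & dyadic_block (f s') s'].
Proof.
move=> le_f sS s'S ne; apply/pred0P => x /=; apply/negbTE/negP.
rewrite !mem_dyadic_block => /andP[/eqP e /eqP e'].
case: (leqP (f s) (f s')) => [le | /ltnW le].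
  have := same_block_up le e; rewrite e' => e''.
  by have := dyadic_block_other s'S sS ne (le_f s'); rewrite mem_dyadic_block e'' eqxx.
have := same_block_up le e'; rewrite e => e''; rewrite eq_sym in ne.
by have := dyadic_block_other sS s'S ne (le_f s); rewrite mem_dyadic_block e'' eqxx.
Qed.

Lemma dyadic_blocks_inj S (f : 'I_(2 ^ m) -> nat) :
  (forall u, f u <= isolation_level S u) ->
  {in S &, injective (fun s => dyadic_block (f s) s)}.
Proof.
move=> le_f s s' sS s'S /= e; apply/eqP; apply: contraTT (dyadic_block_self (f s') s').
by rewrite eq_sym => ne; rewrite -e (dyadic_block_other sS s'S ne).
Qed.

Lemma dyadic_system_interval S : interval_system #|S| (dyadic_system S).
Proof.
apply/and3P; split.
- by rewrite card_in_imset //; apply: dyadic_blocks_inj (block_level_le S).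
- by apply/forall_inP => I /imsetP [s _ ->]; apply: dyadic_block_interval.
apply/trivIsetP => A B /imsetP [s sS ->] /imsetP [s' s'S ->] ne.
by apply: dyadic_blocks_disjoint (block_level_le S) sS s'S _; apply: contra ne => /eqP ->.
Qed.

(* The blocks at the isolation levels are disjoint, so their sizes sum to <= t. *)
Lemma sum_isolation_blocks S : \sum_(s in S) 2 ^ isolation_level S s <= 2 ^ m.
Proof.
have le_m u : isolation_level S u <= m by case: (isolation_levelP S u).
have refl u : isolation_level S u <= isolation_level S u by [].
pose Q := [set dyadic_block (isolation_level S s) s | s in S].
have triv : trivIset Q.
  apply/trivIsetP => A B /imsetP [s sS ->] /imsetP [s' s'S ->] ne.
  by apply: dyadic_blocks_disjoint refl sS s'S _; apply: contra ne => /eqP ->.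
move: (eqP triv); rewrite big_imset /=; last exact: dyadic_blocks_inj refl.
under eq_bigr => s _ do rewrite card_dyadic_block //.
by move=> ->; apply: leq_trans (max_card _) _; rewrite card_ord.
Qed.

(* 4 * 2^(d-2) = 2^d for d >= 2; the +4 absorbs the truncation when d < 2. *)
Lemma pow2_sub2 d : 4 * 2 ^ (d - 2) <= 2 ^ d + 4.
Proof. by case: d => [|[|d]] //; rewrite !subSS subn0 !expnS; lia. Qed.

(* Phi(S) has total length at most (t + 4|S|)/4, hence is valid when 4|S| <= t. *)
Lemma dyadic_system_valid S : 4 * #|S| <= 2 ^ m -> valid_system (dyadic_system S).
Proof.
move=> small; rewrite /valid_system big_imset /=; last exact: dyadic_blocks_inj (block_level_le S).
under eq_bigr => s _ do rewrite card_dyadic_block ?block_level_le_m //.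
have quarter : 4 * \sum_(s in S) 2 ^ block_level S s
    <= \sum_(s in S) 2 ^ isolation_level S s + 4 * #|S|.
  rewrite big_distrr /= [4 * #|S|]mulnC -sum_nat_const -big_split /=.
  by apply: leq_sum => s _; apply: pow2_sub2.
have := sum_isolation_blocks S; rewrite -mul2n.
move: small quarter; set X := \sum_(s in S) _; set Y := \sum_(s in S) _; lia.
Qed.

End DyadicSystem.

(* Moving each point s of S anywhere inside its block of Phi(S) does not change
   which pairs of points share which dyadic blocks, hence leaves Phi unchanged. *)
Section MovePoints.
Variables (m : nat) (S : {set 'I_(2 ^ m)}) (mv : 'I_(2 ^ m) -> 'I_(2 ^ m)).
Hypothesis mv_in_block : forall s, s \in S -> mv s \in dyadic_block (block_level S s) s.

(* Points of S are separated at the larger of their two block levels, and the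
   moved points agree with them there, so all coincidences are preserved. *)
Lemma moved_same_block v s : v \in S -> s \in S -> v != s -> forall j,
  (mv v %/ 2 ^ j == mv s %/ 2 ^ j) = (v %/ 2 ^ j == s %/ 2 ^ j).
Proof.
move=> vS sS ne j; set a := maxn (block_level S v) (block_level S s).
have near u : u \in S -> block_level S u <= a -> mv u %/ 2 ^ a = u %/ 2 ^ a.
  by move=> uS le; have := mv_in_block uS; rewrite mem_dyadic_block => /eqP /(same_block_up le).
have apart : v %/ 2 ^ a != s %/ 2 ^ a.
  rewrite /a; case: (leqP (block_level S v) (block_level S s)) => _.
    have [_ iso _] := isolation_levelP S s.
    exact: isolatedP (isolated_down (block_level_le S s) iso) vS ne.
  have [_ iso _] := isolation_levelP S v; rewrite eq_sym.
  by apply: isolatedP (isolated_down (block_level_le S v) iso) sS _; rewrite eq_sym.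
by rewrite (same_block_transfer (esym (near v vS (leq_maxl _ _)))
  (esym (near s sS (leq_maxr _ _))) apart).
Qed.

(* The blocks of Phi(S) are disjoint, so moving is injective on S. *)
Lemma moved_inj : {in S &, injective mv}.
Proof.
move=> v s vS sS e; apply/eqP; apply: contraTT (mv_in_block sS) => ne.
move: (dyadic_blocks_disjoint (block_level_le S) vS sS ne) => /pred0P /(_ (mv v)) /=.
by rewrite mv_in_block // e => /negbT.
Qed.

Lemma isolated_moved s j : s \in S -> isolated (mv @: S) (mv s) j = isolated S s j.
Proof.
move=> sS; apply/forall_inP/forall_inP => iso v.
  move=> vS; apply/implyP => ne.
  have ne' : mv v != mv s by apply: contra ne => /eqP /moved_inj ->.
  by have := implyP (iso (mv v) (imset_f mv vS)) ne'; rewrite moved_same_block.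
case/imsetP => w wS ->; apply/implyP => ne.
have ne' : w != s by apply: contra ne => /eqP ->.
by rewrite moved_same_block // (implyP (iso w wS) ne').
Qed.

Lemma isolation_level_moved s :
  s \in S -> isolation_level (mv @: S) (mv s) = isolation_level S s.
Proof.
move=> sS; have iso j := isolated_moved j sS.
have [le1 iso1 max1] := isolation_levelP (mv @: S) (mv s).
have [le2 iso2 max2] := isolation_levelP S s.
apply/eqP; rewrite eqn_leq; apply/andP; split.
  by apply: max2 le1 _; rewrite -iso.
by apply: max1 le2 _; rewrite iso.
Qed.

Lemma dyadic_system_moved : dyadic_system (mv @: S) = dyadic_system S.
Proof.
rewrite /dyadic_system -imset_comp; apply: eq_in_imset => s sS /=.
rewrite /block_level isolation_level_moved //; apply/setP => x; rewrite !mem_dyadic_block.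
by have := mv_in_block sS; rewrite mem_dyadic_block => /eqP ->.
Qed.

End MovePoints.

Section ChoiceFunctions.
Variable n : nat.
Implicit Types (F : {set {set 'I_n}}) (c : {ffun {set 'I_n} -> option 'I_n}).

Lemma choice_fun_in F c I : choice_fun F c -> I \in F -> exists2 x, c I = Some x & x \in I.
Proof. by move=> /forallP /(_ I); case: ifP => // _; case: (c I) => // x; exists x. Qed.

Lemma choice_fun_out F c I : choice_fun F c -> I \notin F -> c I = None.
Proof. by move=> /forallP /(_ I) + I_out; rewrite (negbTE I_out) => /eqP. Qed.

End ChoiceFunctions.

Section ChoicesOfDyadicSystem.
Variable m : nat.
Implicit Types (S : {set 'I_(2 ^ m)}) (c : {ffun {set 'I_(2 ^ m)} -> option 'I_(2 ^ m)}).

Definition canonical_choice S : {ffun {set 'I_(2 ^ m)} -> option 'I_(2 ^ m)} :=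
  [ffun I => if I \in dyadic_system S then [pick x in S :&: I] else None].

Lemma canonical_choice_block S s :
  s \in S -> canonical_choice S (dyadic_block (block_level S s) s) = Some s.
Proof.
move=> sS; rewrite ffunE block_in_dyadic_system // setI_dyadic_block //.
by case: pickP => [x /set1P -> //|/(_ s)]; rewrite set11.
Qed.

Lemma canonical_choiceP S :
  choice_fun (dyadic_system S) (canonical_choice S) /\ chosen_set (canonical_choice S) = S.
Proof.
split.
  apply/forallP => I; case: ifP => [/imsetP [s sS ->]|I_out].
    by rewrite canonical_choice_block // dyadic_block_self.
  by rewrite ffunE I_out.
apply/setP => x; rewrite inE; apply/existsP/idP => [[I]|xS].
  rewrite ffunE; case: ifP => // _.
  by case: pickP => // y /setIP [yS _] /eqP [<-].
by exists (dyadic_block (block_level S x) x); rewrite canonical_choice_block.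
Qed.

(* Any choice for Phi(S) is obtained by moving each point of S inside its block,
   so the chosen set S' satisfies |S'| = |S| and Phi(S') = Phi(S). *)
Lemma chosen_set_dyadic S c : choice_fun (dyadic_system S) c ->
  #|chosen_set c| = #|S| /\ dyadic_system (chosen_set c) = dyadic_system S.
Proof.
move=> c_ok; pose mv s := odflt s (c (dyadic_block (block_level S s) s)).
have mvP s : s \in S ->
    c (dyadic_block (block_level S s) s) = Some (mv s) /\
    mv s \in dyadic_block (block_level S s) s.
  move=> sS; have [x e xI] := choice_fun_in c_ok (block_in_dyadic_system sS).
  by rewrite /mv e.
have mv_in_block s : s \in S -> mv s \in dyadic_block (block_level S s) s.
  by move=> /mvP [].
have -> : chosen_set c = mv @: S.
  apply/setP => x; rewrite inE; apply/existsP/imsetP => [[I /eqP e]|[s sS ->]].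
    case: (boolP (I \in dyadic_system S)) => [/imsetP [s sS eI]|I_out]; last first.
      by rewrite (choice_fun_out c_ok I_out) in e.
    by exists s => //; move: e; rewrite eI (proj1 (mvP s sS)) => -[].
  by exists (dyadic_block (block_level S s) s); rewrite (proj1 (mvP s sS)).
by rewrite card_in_imset ?dyadic_system_moved //; apply: moved_inj mv_in_block.
Qed.

Lemma card_choices_with_set S0 S :
  #|[set c | choice_fun (dyadic_system S0) c & chosen_set c == S]| =
  ((#|S| == #|S0|) && (dyadic_system S == dyadic_system S0)).
Proof.
case: andP => [[/eqP card_S /eqP same_Phi]|not_fibre] /=; last first.
  apply/eqP; rewrite cards_eq0; apply/eqP/setP => c; rewrite !inE.
  apply/negbTE/andP => -[c_ok /eqP chosen].
  by have [] := chosen_set_dyadic c_ok; rewrite chosen => c1 c2; apply: not_fibre; rewrite c1 c2.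
have [can_ok can_chosen] := canonical_choiceP S.
rewrite -same_Phi; apply: etrans (cards1 (canonical_choice S)).
apply: eq_card => c; rewrite !inE; apply/andP/eqP => [[c_ok /eqP chosen]|->]; last first.
  by rewrite can_ok can_chosen.
apply/ffunP => I; case: (boolP (I \in dyadic_system S)) => [I_in|I_out]; last first.
  by rewrite (choice_fun_out c_ok I_out) (choice_fun_out can_ok I_out).
have [y cI yI] := choice_fun_in c_ok I_in.
have /imsetP [s sS eI] := I_in.
have yS : y \in S by rewrite -chosen inE; apply/existsP; exists I; rewrite cI.
have : y \in S :&: I by rewrite inE yS yI.
by rewrite cI eI setI_dyadic_block // => /set1P ->; rewrite canonical_choice_block.
Qed.

End ChoicesOfDyadicSystem.

Lemma sum_indicator (T : finType) (P : pred T) : \sum_(i : T) (P i : nat) = #|[set i | P i]|.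
Proof. by rewrite -sum1dep_card [RHS]big_mkcond; apply: eq_bigr => i _; case: (P i). Qed.

Lemma sum_in_indicator (T : finType) (S : {set T}) (P : pred T) :
  \sum_(b in S) (P b : nat) = #|[set b in S | P b]|.
Proof.
rewrite big_mkcond -[RHS]sum_indicator; apply: eq_bigr => b _.
by case: (b \in S).
Qed.

Lemma card_by_fibres (A B : finType) (P : pred A) (f : A -> B) :
  #|[set a | P a]| = \sum_(b : B) #|[set a | P a & f a == b]|.
Proof.
rewrite -sum1dep_card (partition_big f xpredT) //=.
by apply: eq_bigr => b _; rewrite -sum1dep_card; apply: eq_bigl => a.
Qed.

Section Fibres.
Variables m k : nat.

Definition fibre (F : {set {set 'I_(2 ^ m)}}) : {set {set 'I_(2 ^ m)}} :=
  [set S : {set 'I_(2 ^ m)} | (#|S| == k) && (dyadic_system S == F)].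

Lemma sum_fibres_indicator (S : {set 'I_(2 ^ m)}) :
  \sum_F (S \in fibre F : nat) = (#|S| == k).
Proof.
rewrite (bigD1 (dyadic_system S)) //= big1 => [|F F_ne]; first by rewrite inE eqxx andbT addn0.
by rewrite inE (eq_sym _ F) (negbTE F_ne) andbF.
Qed.

Lemma sum_card_fibres : \sum_(F : {set {set 'I_(2 ^ m)}}) #|fibre F| = 'C(2 ^ m, k).
Proof.
have card_fibre F : #|fibre F| = \sum_(S : {set 'I_(2 ^ m)}) (S \in fibre F : nat).
  by rewrite sum_indicator; apply: eq_card => S; rewrite [RHS]inE.
under eq_bigr => F _ do rewrite card_fibre.
rewrite exchange_big /=; under eq_bigr => S _ do rewrite sum_fibres_indicator.
by rewrite sum_indicator card_draws card_ord.
Qed.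

Lemma card_choice_funs (S0 : {set 'I_(2 ^ m)}) : #|S0| = k ->
  #|[set c | choice_fun (dyadic_system S0) c]| = #|fibre (dyadic_system S0)|.
Proof.
move=> card_S0; rewrite (card_by_fibres _ (@chosen_set (2 ^ m))).
under eq_bigr => S _ do rewrite card_choices_with_set card_S0.
by rewrite sum_indicator; apply: eq_card => S; rewrite !inE.
Qed.

End Fibres.

Section PairCounting.
Variables (T : finType) (k : nat).

Definition pair_count (a b : T) : nat :=
  #|[set S : {set T} | [&& #|S| == k, a \in S & b \in S]]|.

Lemma sum_pairs_of_ksets (w : T -> T -> nat) :
  \sum_(S : {set T} | #|S| == k) \sum_(a in S) \sum_(b in S) w a b =
  \sum_a \sum_b w a b * pair_count a b.
Proof.
have weight a b : w a b * pair_count a b =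
    \sum_(S : {set T}) (if [&& #|S| == k, a \in S & b \in S] then w a b else 0).
  rewrite /pair_count -sum_indicator big_distrr /=; apply: eq_bigr => S _.
  by case: ifP; rewrite ?muln1 ?muln0.
under eq_bigr => a _ do under eq_bigr => b _ do rewrite weight.
under eq_bigr => a _ do rewrite exchange_big /=.
rewrite exchange_big /= big_mkcond /=; apply: eq_bigr => S _.
case: ifP => card_S /=; last by rewrite big1 // => a _; rewrite big1 // => b _; rewrite card_S.
rewrite big_mkcond; apply: eq_bigr => a _ /=.
case: ifP => aS /=; first by rewrite big_mkcond.
by rewrite big1.
Qed.

(* By symmetry, pair_count is the same for all pairs of distinct points: a
   permutation of T mapping (a, b) to (a', b') maps the sets counted injectively. *)
Lemma pair_count_le (a b a' b' : T) :
  a != b -> a' != b' -> pair_count a b <= pair_count a' b'.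
Proof.
move=> ne ne'; pose t1 := tperm a a'; pose pi : {perm T} := (t1 * tperm (t1 b) b')%g.
have ne1 : a' != t1 b by rewrite /t1 -{1}(tpermL a a') (inj_eq perm_inj).
have pi_a : pi a = a' by rewrite permM tpermL tpermD // eq_sym.
have pi_b : pi b = b' by rewrite permM tpermL.
rewrite /pair_count -[X in X <= _](card_imset _ (imset_inj (@perm_inj _ pi))).
apply/subset_leq_card/subsetP => A /imsetP [S]; rewrite !inE => /and3P [card_S aS bS] ->.
rewrite card_imset; last exact: perm_inj.
by rewrite card_S -pi_a -pi_b !(mem_imset _ _ (@perm_inj _ pi)) aS bS.
Qed.

Lemma pair_count_sym (a b a' b' : T) :
  a != b -> a' != b' -> pair_count a b = pair_count a' b'.
Proof. by move=> ne ne'; apply/eqP; rewrite eqn_leq !pair_count_le. Qed.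

Lemma sum_pairs_offdiag (w : T -> T -> nat) (a0 b0 : T) :
  a0 != b0 -> (forall a, w a a = 0) ->
  \sum_a \sum_b w a b * pair_count a b = pair_count a0 b0 * \sum_a \sum_b w a b.
Proof.
move=> ne0 w_diag; rewrite big_distrr; apply: eq_bigr => a _; rewrite big_distrr.
apply: eq_bigr => b _; case: (eqVneq a b) => [->|ne]; first by rewrite w_diag /= mul0n muln0.
by rewrite /= (pair_count_sym ne ne0) mulnC.
Qed.

End PairCounting.

(* Geometric sum: 2^(n-d) = 1 + sum_(d <= l < n) 2^(n-l-1), so the bound holds
   whenever g marks every level of [d, n). *)
Lemma pow2_geometric n d (g : nat -> bool) :
  d <= n -> (forall l, d <= l -> l < n -> g l) ->
  2 ^ (n - d) <= 1 + \sum_(l < n) g l * 2 ^ (n - l.+1).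
Proof.
elim: n => [|n IH] le_dn g_ge; first by move: le_dn; rewrite leqn0 => /eqP ->.
case: (leqP d n) => [le_dn'|lt_nd]; last first.
  have -> : d = n.+1 by apply/eqP; rewrite eqn_leq le_dn lt_nd.
  by rewrite subnn expn0 leq_addr.
rewrite big_ord_recr /= subnn g_ge // muln1.
have shift : \sum_(i < n) g (widen_ord (leqnSn n) i) * 2 ^ (n.+1 - (widen_ord (leqnSn n) i).+1)
    = 2 * \sum_(l < n) g l * 2 ^ (n - l.+1).
  rewrite big_distrr /=; apply: eq_bigr => l _ /=.
  rewrite subSS -[n - l]prednK ?subn_gt0 // expnS mulnCA.
  by congr (_ * (_ * _)); rewrite subnS.
rewrite shift subSn // expnS.
have := IH le_dn' (fun l le_l lt_l => g_ge l le_l (ltnW lt_l)); lia.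
Qed.

Section Cost.
Variable m : nat.
Implicit Types (S : {set 'I_(2 ^ m)}) (s a : 'I_(2 ^ m)).

(* t * val(Phi(S)): each block of size 2^e contributes t / 2^e. *)
Definition cost S : nat := \sum_(s in S) 2 ^ (m - block_level S s).

Definition neighbours S a (j : nat) : nat :=
  \sum_(b in S) ((b != a) && (b %/ 2 ^ j == a %/ 2 ^ j)).

Lemma neighbours_pos S a j : ~~ isolated S a j -> 1 <= neighbours S a j.
Proof.
case/forall_inPn => b bS; rewrite negb_imply => /andP [ne /negPn same].
by rewrite /neighbours (bigD1 b) //= ne same.
Qed.

(* Above its isolation level, a point has a neighbour at every level, so its
   cost is dominated by a weighted count of neighbours. *)
Lemma point_cost_bound S s :
  2 ^ (m - block_level S s) <= 4 * (1 + \sum_(l < m) neighbours S s l.+1 * 2 ^ (m - l.+1)).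
Proof.
have [le_m _ max_iso] := isolation_levelP S s.
have shift : 2 ^ (m - block_level S s) <= 4 * 2 ^ (m - isolation_level S s).
  by rewrite (_ : 4 = 2 ^ 2) // -expnD leq_pexp2l // /block_level; lia.
apply: leq_trans shift _; rewrite leq_mul2l /=.
apply: leq_trans (pow2_geometric (g := fun l => ~~ isolated S s l.+1) le_m _) _.
  move=> l le_l lt_l; apply/negP => iso; have := max_iso _ lt_l iso; lia.
rewrite leq_add2l; apply: leq_sum => l _; rewrite leq_mul2r; apply/orP; right.
by case: (boolP (isolated S s l.+1)) => // /neighbours_pos.
Qed.

Variables (k : nat) (a0 b0 : 'I_(2 ^ m)).
Hypothesis a0_ne_b0 : a0 != b0.

(* Counting ordered pairs of distinct points in k-subsets in two ways. *)
Lemma count_distinct_pairs :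
  'C(2 ^ m, k) * (k * (k - 1)) = pair_count k a0 b0 * (2 ^ m * (2 ^ m - 1)).
Proof.
have := sum_pairs_of_ksets k (fun a b : 'I_(2 ^ m) => (b != a : nat)).
rewrite (sum_pairs_offdiag k a0_ne_b0) => [|a]; last by rewrite eqxx.
have -> : \sum_(a : 'I_(2 ^ m)) \sum_(b : 'I_(2 ^ m)) (b != a : nat) = 2 ^ m * (2 ^ m - 1).
  rewrite (eq_bigr (fun _ => 2 ^ m - 1)) ?sum_nat_const ?card_ord //.
  move=> a _; rewrite sum_indicator; transitivity #|[set~ a]|.
    by apply: eq_card => b; rewrite !inE.
  by rewrite cardsC1 card_ord subn1.
move <-; rewrite (eq_bigr (fun _ => k * (k - 1))).
  rewrite sum_nat_const; congr (_ * _).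
  transitivity 'C(#|'I_(2 ^ m)|, k); first by rewrite card_ord.
  by rewrite -card_draws; apply: eq_card => S; rewrite !inE.
move=> S /eqP card_S; rewrite -card_S (eq_bigr (fun _ => #|S| - 1)) ?sum_nat_const //.
move=> a aS; rewrite sum_in_indicator (cardsD1 a S) aS add1n subSS subn0.
by apply: eq_card => b; rewrite !inE andbC.
Qed.

Lemma sum_neighbours j : j <= m ->
  \sum_(S : {set 'I_(2 ^ m)} | #|S| == k) \sum_(s in S) neighbours S s j =
  pair_count k a0 b0 * (2 ^ m * (2 ^ j - 1)).
Proof.
move=> le_jm.
have := sum_pairs_of_ksets k
  (fun a b : 'I_(2 ^ m) => ((b != a) && (b %/ 2 ^ j == a %/ 2 ^ j) : nat)).
rewrite (sum_pairs_offdiag k a0_ne_b0) => [|a]; last by rewrite eqxx.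
move=> ->; congr (_ * _).
rewrite (eq_bigr (fun _ => 2 ^ j - 1)) ?sum_nat_const ?card_ord //.
move=> a _; rewrite sum_indicator; transitivity #|dyadic_block j a :\ a|.
  by apply: eq_card => b; rewrite !inE.
have := cardsD1 a (dyadic_block j a).
by rewrite dyadic_block_self card_dyadic_block // => ->; rewrite add1n subSS subn0.
Qed.

End Cost.

Lemma level_cost_bound m k (a0 b0 : 'I_(2 ^ m)) (l : 'I_m) : a0 != b0 ->
  (\sum_(S : {set 'I_(2 ^ m)} | #|S| == k) \sum_(s in S) neighbours S s l.+1) * 2 ^ (m - l.+1)
  <= 2 * ('C(2 ^ m, k) * (k * (k - 1))).
Proof.
move=> ne; rewrite (sum_neighbours _ ne (ltn_ord l)) (count_distinct_pairs _ ne).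
have split_t : 2 ^ l.+1 * 2 ^ (m - l.+1) = 2 ^ m by rewrite -expnD subnKC.
have t_ge2 : 2 <= 2 ^ m by rewrite -{1}(expn1 2) leq_pexp2l // (leq_ltn_trans _ (ltn_ord l)).
move: split_t t_ge2; set t := 2 ^ m; set u := 2 ^ l.+1; set v := 2 ^ (m - l.+1).
set P := pair_count k a0 b0 => split_t t_ge2.
have : P * (t * (u - 1)) * v <= (P * t) * t.
  by rewrite -{3}split_t -!mulnA leq_mul2l leq_mul2l leq_mul2r leq_subr !orbT.
have : (P * t) * t <= (P * t) * (2 * (t - 1)) by rewrite leq_mul2l; apply/orP; right; lia.
lia.
Qed.

Lemma sum_cost_bound m k : 1 <= m ->
  \sum_(S : {set 'I_(2 ^ m)} | #|S| == k) cost S <= 8 * m * k ^ 2 * 'C(2 ^ m, k).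
Proof.
move=> m_pos.
have t_gt1 : 1 < 2 ^ m by rewrite -{1}(expn0 2) ltn_exp2l.
pose a0 : 'I_(2 ^ m) := Ordinal (ltnW t_gt1); pose b0 : 'I_(2 ^ m) := Ordinal t_gt1.
have ne : a0 != b0 by [].
set C := 'C(2 ^ m, k).
pose N l := \sum_(S : {set 'I_(2 ^ m)} | #|S| == k) \sum_(s in S) neighbours S s l.
have by_points : \sum_(S : {set 'I_(2 ^ m)} | #|S| == k) cost S <=
    \sum_(S : {set 'I_(2 ^ m)} | #|S| == k) \sum_(s in S)
      4 * (1 + \sum_(l < m) neighbours S s l.+1 * 2 ^ (m - l.+1)).
  by apply: leq_sum => S _; apply: leq_sum => s _; apply: point_cost_bound.
have regroup : \sum_(S : {set 'I_(2 ^ m)} | #|S| == k) \sum_(s in S)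
      4 * (1 + \sum_(l < m) neighbours S s l.+1 * 2 ^ (m - l.+1)) =
    4 * (C * k + \sum_(l < m) N l.+1 * 2 ^ (m - l.+1)).
  under eq_bigr => S _ do rewrite -big_distrr /=.
  rewrite -big_distrr /=; congr (4 * _).
  under eq_bigr => S _ do rewrite big_split /=.
  rewrite big_split /=; congr (_ + _).
    rewrite (eq_bigr (fun _ => k)); last by move=> S /eqP <-; rewrite sum1_card.
    rewrite sum_nat_const; congr (_ * _).
    transitivity 'C(#|'I_(2 ^ m)|, k); last by rewrite card_ord.
    by rewrite -card_draws; apply: eq_card => S; rewrite !inE.
  under eq_bigr => S _ do rewrite exchange_big /=.
  rewrite exchange_big /=; apply: eq_bigr => l _.
  by rewrite /N big_distrl /=; apply: eq_bigr => S _; rewrite big_distrl.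
have levels : \sum_(l < m) N l.+1 * 2 ^ (m - l.+1) <= m * (2 * (C * (k * (k - 1)))).
  rewrite -[m in m * _]card_ord -sum_nat_const.
  by apply: leq_sum => l _; apply: level_cost_bound ne.
apply: leq_trans by_points _; rewrite regroup.
move: levels; set L := \sum_(l < m) _.
have : C * k <= m * (C * k) by rewrite leq_pmull.
nia.
Qed.

Import Order.TTheory GRing.Theory Num.Theory.
Local Open Scope ring_scope.

Section DyadicDistribution.
Variables (R : realType) (m k : nat).
Hypothesis k_le_t : (k <= 2 ^ m)%N.

Local Notation C := 'C(2 ^ m, k).

Lemma binomial_neq0 : (C%:R : R) != 0.
Proof. by rewrite pnatr_eq0 -lt0n bin_gt0. Qed.

Definition dyadic_distribution : {ffun {set {set 'I_(2 ^ m)}} -> R} :=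
  [ffun F => #|fibre k F|%:R / C%:R].

Local Notation mu := dyadic_distribution.

Lemma dyadic_distribution_support F :
  mu F != 0 -> exists2 S : {set 'I_(2 ^ m)}, #|S| = k & F = dyadic_system S.
Proof.
rewrite ffunE; have [->|[S]] := set_0Vmem (fibre k F); first by rewrite cards0 mul0r eqxx.
by rewrite inE => /andP [/eqP card_S /eqP <-] _; exists S.
Qed.

Lemma dyadic_distribution_randomized : randomized_system k mu.
Proof.
split; [|split].
- by move=> F; rewrite ffunE divr_ge0.
- under eq_bigr => F _ do rewrite ffunE.
  by rewrite -mulr_suml -natr_sum sum_card_fibres divff // binomial_neq0.
by move=> F /dyadic_distribution_support [S <- ->]; apply: dyadic_system_interval.
Qed.

Lemma dyadic_distribution_valid : (4 * k <= 2 ^ m)%N -> valid_rsystem mu.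
Proof.
move=> small F /dyadic_distribution_support [S card_S ->].
by apply: dyadic_system_valid; rewrite card_S.
Qed.

Lemma sets_prob_dyadic_system (S0 S : {set 'I_(2 ^ m)}) : #|S0| = k ->
  sets_prob R (dyadic_system S0) S =
  (S \in fibre k (dyadic_system S0))%:R / #|fibre k (dyadic_system S0)|%:R.
Proof.
by move=> card_S0; rewrite /sets_prob card_choices_with_set (card_choice_funs card_S0) card_S0 inE.
Qed.

(* mu is perfect: the fibre probabilities of mu cancel the uniform
   probabilities of Sets(Phi(S0)) on the fibres. *)
Lemma dyadic_distribution_perfect : perfect k mu.
Proof.
move=> S; rewrite /rsets_prob.
have term F : mu F * sets_prob R F S = (S \in fibre k F)%:R / C%:R.
  have [mu0|/dyadic_distribution_support [S0 card_S0 ->]] := eqVneq (mu F) 0.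
    rewrite mu0 mul0r; move: mu0; rewrite ffunE => /eqP.
    rewrite mulf_eq0 invr_eq0 (negbTE binomial_neq0).
    by rewrite orbF pnatr_eq0 cards_eq0 => /eqP ->; rewrite inE mul0r.
  rewrite sets_prob_dyadic_system // ffunE mulrC mulrA divfK // pnatr_eq0 cards_eq0.
  by apply/set0Pn; exists S0; rewrite inE card_S0 !eqxx.
under eq_bigr => F _ do rewrite term.
by rewrite -mulr_suml -natr_sum sum_fibres_indicator; case: (#|S| == k); rewrite ?mul1r ?mul0r.
Qed.

Lemma val_dyadic_system (S : {set 'I_(2 ^ m)}) :
  val_sys R (dyadic_system S) = (cost S)%:R / (2 ^ m)%:R.
Proof.
rewrite /val_sys big_imset /=; last exact: dyadic_blocks_inj (block_level_le S).
rewrite natr_sum mulr_suml; apply: eq_bigr => s _.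
rewrite card_dyadic_block ?block_level_le_m //.
have -> : (2 ^ m)%:R = (2 ^ (m - block_level S s))%:R * (2 ^ block_level S s)%:R :> R.
  by rewrite -natrM -expnD subnK ?block_level_le_m.
by rewrite invfM mulrA divff ?mul1r // pnatr_eq0 expn_eq0.
Qed.

Lemma dyadic_distribution_value :
  val_rsys mu = (\sum_(S : {set 'I_(2 ^ m)} | #|S| == k) cost S)%:R / (2 ^ m)%:R / C%:R.
Proof.
rewrite /val_rsys (partition_big (@dyadic_system m) xpredT) //= natr_sum !mulr_suml.
apply: eq_bigr => F _; rewrite ffunE mulrAC; congr (_ / _).
transitivity (\sum_(S in fibre k F) val_sys R F); first by rewrite sumr_const mulr_natl.
rewrite natr_sum mulr_suml; apply: eq_big => [S|S]; first by rewrite inE.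
by rewrite inE => /andP [_ /eqP <-]; rewrite val_dyadic_system.
Qed.

End DyadicDistribution.

(* Theorem 15, with t = 2^m so that log2 t = m: mu is valid since 4k <= t, and
   E[val] <= 8 k^2 m / t by the cost bound (m >= 1 since 6k <= t). *)
Theorem mainTheorem15 (R : realType) (k m : nat) :
  (1 <= k)%N -> (k%:R <= (2 ^ m)%:R / 6 :> R) ->
  exists mu : {ffun {set {set 'I_(2 ^ m)}} -> R},
    [/\ randomized_system k mu, valid_rsystem mu, perfect k mu &
        val_rsys mu <= 10 * (k ^ 2)%:R * m%:R / (2 ^ m)%:R].
Proof.
move=> k_pos k_small; have small : (6 * k <= 2 ^ m)%N.
  by rewrite ler_pdivlMr // in k_small; rewrite mulnC -(ler_nat R) natrM.
have m_pos : (1 <= m)%N by case: m {k_small} small; rewrite ?expn0; lia.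
have k_le_t : (k <= 2 ^ m)%N by lia.
exists (dyadic_distribution R m k); split.
- exact: dyadic_distribution_randomized.
- by apply: dyadic_distribution_valid; lia.
- exact: dyadic_distribution_perfect.
rewrite dyadic_distribution_value ler_pdivrMr ?ltr0n ?bin_gt0 //.
rewrite mulrAC ler_pM2r ?invr_gt0 ?ltr0n ?expn_gt0 // -!natrM ler_nat.
apply: leq_trans (sum_cost_bound k m_pos) _; rewrite mulnC; lia.
Qed.
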